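(* Let $S$ be a triangulated surface with set of simplices $\mathcal V=\mathcal V_0\cup\mathcal V_1\cup\mathcal V_2$, and let $V:\mathcal V_0\to\mathcal N$ be any map. Then there is a unique simplicial surface tonnetz $T$ on $S$ which is a vertex tonnetz satisfying $[T(\rho)]=\{V(\rho)\}$ for every vertex $\rho\in\mathcal V_0$ and, for every face $\sigma\in\mathcal V_2$, $T(\sigma)$ equals the multiset $\{V(\rho)\mid \rho\in\mathcal V_0,\ \rho<\sigma\}$ (the values of $V$ on the three vertices of $\sigma$, counted with multiplicity).
   Context: Let $\mathcal N=\mathbb Z/12\mathbb Z$ (pitch classes). A multiset in $\mathcal N$ is a finite collection of elements of $\mathcal N$ with (finite) multiplicities; $\operatorname{Multisets}(\mathcal N)$ denotes the set of all of them. For a multiset $\mathcal C$, $|\mathcal C|$ is its order (number of elements counted with multiplicity) and $[\mathcal C]$ its underlying set. For a set $\mathcal A$ and multiset $\mathcal C$, a bijection $\phi:\mathcal A\to\mathcal C$ means a map $\phi:\mathcal A\to[\mathcal C]$ such that for each $c\in[\mathcal C]$ the cardinality of $\phi^{-1}(c)$ equals the multiplicity of $c$ in $\mathcal C$. Let $S$ be a surface (2-dimensional topological manifold, without boundary) with a triangulation whose sets of vertices, edges and faces are $\mathcal V_0,\mathcal V_1,\mathcal V_2$; $\mathcal V=\mathcal V_0\cup\mathcal V_1\cup\mathcal V_2$ is partially ordered by inclusion ($\le$, $<$), and $\tau\prec\sigma$ means $\tau\le\sigma$ with $\tau$ of codimension 1 in $\sigma$. Every edge has two vertices and lies in exactly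 two faces. A simplicial surface tonnetz on $S$ is a map $T:\mathcal V\to\operatorname{Multisets}(\mathcal N)$ such that: (1) (downwards coherent) for each $\sigma\in\mathcal V_1\cup\mathcal V_2$ there exists a bijection $\partial_\sigma:\{\tau\mid\tau\prec\sigma\}\to T(\sigma)$ such that $\partial_\sigma(\tau)=N$ implies $N\in T(\tau)$; (2) (upwards coherent) for each $\rho\in\mathcal V_0\cup\mathcal V_1$ there exists a bijection $\Delta_\rho:\{\tau\mid\tau\succ\rho\}\to T(\rho)$ such that $\Delta_\rho(\tau)=N$ implies $N\in T(\tau)$. (The bijections are not part of the data; only their existence is required.) A tonnetz $T$ is a vertex tonnetz if $[T(\rho)]$ has cardinality one for every vertex $\rho\in\mathcal V_0$. *)

From HB Require Import structures.
From mathcomp Require Import all_boot all_algebra.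
From mathcomp Require Import finmap.
Set Implicit Arguments. Unset Strict Implicit. Unset Printing Implicit Defensive.
Local Open Scope fset_scope.

(* Pitch classes N = Z/12Z. *)
Definition pitch := 'Z_12.

(* Multisets in N: multiplicity functions (automatically finite). *)
Definition mset12 := {ffun pitch -> nat}.
Definition morder (C : mset12) : nat := \sum_(c : pitch) C c.
Definition underlying (C : mset12) : {set pitch} := [set c | 0 < C c]%N.

Definition has_card (T : eqType) (P : T -> Prop) (n : nat) : Prop :=
  exists s : seq T, [/\ uniq s, size s = n & forall x, x \in s <-> P x].

(* A triangulated surface (without boundary), as a 2-dimensional abstract
   simplicial complex on the vertex type V, given by its set of faces
   (triangles), whose vertex links are all circles (combinatorial surface). *)
Record tri_surface (V : choiceType) := TriSurface {
  face : {fset V} -> Prop;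
  face_card : forall f, face f -> #|` f| = 3;
  vertex_in_face : forall v : V, exists f, face f /\ v \in f;
  edge_two_faces : forall e : {fset V}, #|` e| = 2 ->
     (exists f, face f /\ e `<=` f) -> has_card (fun f => face f /\ e `<=` f) 2;
  vertex_link_cycle : forall v : V, exists s : seq V,
     [/\ uniq s, (3 <= size s)%N,
         (forall u, u \in s <-> exists f, [/\ face f, v \in f, u \in f & u != v])
       & (forall a b, a \in s -> b \in s ->
            (face [fset v; a; b] <-> (next s a = b \/ next s b = a)))]
}.

Section Tonnetz.
Variables (V : choiceType) (S : tri_surface V).

Definition is_simplex (s : {fset V}) : Prop :=
  s != fset0 /\ exists f, face S f /\ s `<=` f.

Definition prec (t s : {fset V}) : Prop :=
  [/\ is_simplex t, is_simplex s, t `<=` s & #|` s| = (#|` t|).+1].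

Definition bij_onto (A : {fset V} -> Prop) (C : mset12) (phi : {fset V} -> pitch)
  : Prop := forall c, has_card (fun t => A t /\ phi t = c) (C c).

Definition downwards_coherent (T : {fset V} -> mset12) : Prop :=
  forall s, is_simplex s -> (2 <= #|` s|)%N ->
    exists phi, bij_onto (fun t => prec t s) (T s) phi /\
                forall t, prec t s -> (0 < T t (phi t))%N.

Definition upwards_coherent (T : {fset V} -> mset12) : Prop :=
  forall r, is_simplex r -> (#|` r| <= 2)%N ->
    exists phi, bij_onto (fun t => prec r t) (T r) phi /\
                forall t, prec r t -> (0 < T t (phi t))%N.

(* simplicial surface tonnetz (only the values on simplices matter) *)
Definition is_tonnetz (T : {fset V} -> mset12) : Prop :=
  downwards_coherent T /\ upwards_coherent T.

(* vertices of S are the singletons [fset v], v : V *)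
Definition vertex_tonnetz (T : {fset V} -> mset12) : Prop :=
  forall v : V, #|underlying (T [fset v])| = 1%N.

Definition vertex_generated (Vm : V -> pitch) (T : {fset V} -> mset12) : Prop :=
  [/\ is_tonnetz T, vertex_tonnetz T,
      (forall v : V, underlying (T [fset v]) = [set Vm v])
    & (forall f, face S f -> forall c : pitch,
         T f c = (\sum_(v <- f) (Vm v == c))%N)].

End Tonnetz.

From HB Require Import structures.
From mathcomp Require Import all_boot all_algebra.
From mathcomp Require Import finmap.
From Stdlib Require Import IndefiniteDescription.
Set Implicit Arguments. Unset Strict Implicit. Unset Printing Implicit Defensive.
Local Open Scope fset_scope.

(* The coherence conditions leave no freedom. At a vertex v, upward coherence
   gives T(v) one entry per edge at v, and all of them equal V(v) because
   [T(v)] = {V(v)}; so T(v) is V(v) with multiplicity the degree of v. On an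
   edge {u, w}, downward coherence sends {u} and {w} to entries of T({u, w})
   lying in T(u) and T(w), i.e. to V(u) and V(w); so T({u, w}) = {V(u), V(w)}.
   Conversely these values are coherent: downwards, label the facet opposite a
   vertex z by the value of the cyclic successor of z (a fixed-point-free
   permutation of the vertices, so the facet contains that vertex); upwards,
   label the two faces at an edge by the values of its two endpoints. *)

Lemma has_card_unique (T : eqType) (P : T -> Prop) n m :
  has_card P n -> has_card P m -> n = m.
Proof.
move=> [s [us <- ms]] [t [ut <- mt]].
apply: perm_size; apply: uniq_perm => // x.
by apply/idP/idP => [/ms/mt|/mt/ms].
Qed.

Lemma has_card_count (T U : eqType) (P : T -> Prop) (l : seq T) (f : T -> U) y :
  uniq l -> (forall t, t \in l <-> P t) ->
  has_card (fun t => P t /\ f t = y) (count (fun t => f t == y) l).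
Proof.
move=> ul lP; exists [seq t <- l | f t == y]; split.
- exact: filter_uniq.
- by rewrite size_filter.
- by move=> t; rewrite mem_filter; split=> [/andP[/eqP <- /lP]|[/lP -> <-]];
    rewrite ?eqxx.
Qed.

Lemma bij_onto_count (V : choiceType) (A : {fset V} -> Prop) (C : mset12) phi l :
  uniq l -> (forall t, t \in l <-> A t) ->
  bij_onto A C phi <-> forall c, C c = count (fun t => phi t == c) l.
Proof.
move=> ul lA; split=> [bij c|countE c]; last by rewrite countE; exact: has_card_count.
exact: has_card_unique (bij c) (has_card_count phi c ul lA).
Qed.

Lemma mem_underlying1 (C : mset12) x c :
  underlying C = [set x] -> (0 < C c)%N = (c == x).
Proof. by move/setP/(_ c); rewrite !inE. Qed.

Lemma next_neq (T : eqType) (p : seq T) x :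
  uniq p -> (1 < size p)%N -> x \in p -> next p x != x.
Proof.
move=> up p2 /rot_to[i [|y q] erot].
  by move: p2; rewrite -(size_rot i) erot.
have : uniq (x :: y :: q) by rewrite -erot rot_uniq.
rewrite -(next_rot i up x) erot /= inE negb_or eqxx => /andP[/andP[xy _] _].
by rewrite eq_sym.
Qed.

Lemma big_next (R : Type) (idx : R) (op : Monoid.com_law idx) (T : eqType)
    (p : seq T) (F : T -> R) :
  uniq p -> \big[op/idx]_(x <- p) F (next p x) = \big[op/idx]_(x <- p) F x.
Proof.
move=> up; rewrite -(big_map (next p) xpredT); apply: perm_big.
apply: uniq_perm => //; first by rewrite (map_inj_uniq (can_inj (prev_next up))).
move=> x; apply/mapP/idP => [[y yp ->]|xp]; first by rewrite mem_next.
by exists (prev p x); rewrite ?mem_prev // next_prev.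
Qed.

Section SimplicialSurface.
Variables (V : choiceType) (S : tri_surface V).

Lemma simplex_card s : is_simplex S s -> (0 < #|`s| <= 3)%N.
Proof.
case=> ne [f [Sf sf]]; rewrite cardfs_gt0 ne -(face_card Sf).
exact: fsubset_leq_card.
Qed.

Lemma face_simplex f : face S f -> is_simplex S f.
Proof. by move=> Sf; split; [rewrite -cardfs_gt0 (face_card Sf) | exists f]. Qed.

Lemma simplex_face s : is_simplex S s -> #|`s| = 3 -> face S s.
Proof.
move=> [_ [f [Sf sf]]] s3.
suff /eqP -> : s == f by [].
by rewrite eqEfcard sf (face_card Sf) s3.
Qed.

Lemma simplex1 v : is_simplex S [fset v].
Proof.
split; first by rewrite -cardfs_gt0 cardfs1.
by have [f [Sf vf]] := vertex_in_face S v; exists f; rewrite fsub1set.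
Qed.

Lemma prec_fsetD1 s z :
  is_simplex S s -> (1 < #|`s|)%N -> z \in s -> prec S (s `\ z) s.
Proof.
move=> Ss s2 zs; have [_ [f [Sf sf]]] := Ss.
have sz : #|`s| = (#|`s `\ z|).+1 by rewrite (cardfsD1 z s) zs.
split=> //; last exact: fsubD1set.
split; first by rewrite -cardfs_gt0 -ltnS -sz.
by exists f; split=> //; apply: fsubset_trans (fsubD1set _ _) sf.
Qed.

Lemma precP t s : prec S t s -> exists2 z, z \in s & t = s `\ z.
Proof.
case=> _ _ ts st; have /fsubsetPn[z zs zt] : ~~ (s `<=` t).
  by apply/negP => /fsubset_leq_card; rewrite st ltnn.
exists z => //; apply/eqP; rewrite eqEfcard; apply/andP; split.
  apply/fsubsetP => x xt; rewrite in_fsetD1 (fsubsetP ts _ xt) andbT.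
  by apply: contraNneq zt => <-.
by move: (cardfsD1 z s); rewrite zs st add1n => -[->].
Qed.

Definition facets (s : {fset V}) : seq {fset V} := [seq s `\ z | z <- s].

Lemma uniq_facets s : uniq (facets s).
Proof.
rewrite map_inj_in_uniq ?fset_uniq // => x y xs ys exy.
apply/eqP; apply: contraT => xy.
by have := fsetD11 x s; rewrite exy in_fsetD1 xy xs.
Qed.

Lemma facetsP s : is_simplex S s -> (1 < #|`s|)%N ->
  forall t, t \in facets s <-> prec S t s.
Proof.
move=> Ss s2 t; split=> [/mapP[z zs ->]|/precP[z zs ->]].
  exact: prec_fsetD1.
exact: map_f.
Qed.

Lemma edge_fsetD1 (s : {fset V}) z : #|`s| = 2 -> z \in s -> s `\ z = [fset next s z].
Proof.
move=> s2 zs; have := cardfsD1 z s; rewrite zs s2 add1n => -[/esym/eqP/cardfs1P[y sy]].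
suff : next s z \in s `\ z by rewrite sy inE => /eqP ->.
by rewrite in_fsetD1 next_neq ?mem_next ?fset_uniq ?s2.
Qed.

Lemma edge_fset2 (s : {fset V}) : #|`s| = 2 -> exists u w, u != w /\ s = [fset u; w].
Proof.
move=> s2; have /fset0Pn[u us] : s != fset0 by rewrite -cardfs_gt0 s2.
have := cardfsD1 u s; rewrite us s2 add1n => -[/esym/eqP/cardfs1P[w sw]].
exists u, w; split; last by rewrite -sw fsetD1K.
by have := fset11 w; rewrite -sw in_fsetD1 eq_sym => /andP[].
Qed.

Lemma prec_edge r t : is_simplex S r -> #|`r| = 2 ->
  prec S r t <-> face S t /\ r `<=` t.
Proof.
move=> Sr r2; split=> [[_ St rt t3]|[St rt]].
  by split=> //; apply: simplex_face; rewrite // t3 r2.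
by split=> //; [exact: face_simplex | rewrite (face_card St) r2].
Qed.

Definition link v : seq V :=
  proj1_sig (constructive_indefinite_description _ (vertex_link_cycle S v)).

Lemma linkP v : [/\ uniq (link v), (0 < size (link v))%N
  & forall u, u \in link v <-> exists f, [/\ face S f, v \in f, u \in f & u != v]].
Proof.
rewrite /link; case: constructive_indefinite_description => l [ul l3 lP _] /=.
by split=> //; apply: leq_trans l3.
Qed.

Definition star v : seq {fset V} := [seq [fset v; u] | u <- link v].

Lemma uniq_star v : uniq (star v).
Proof.
have [ul _ lP] := linkP v.
rewrite map_inj_in_uniq // => u w /lP[f [_ _ _ uv]] _ euw.
by have := fset22 v u; rewrite euw !inE (negbTE uv) => /eqP.
Qed.

Lemma starP v t : t \in star v <-> prec S [fset v] t.
Proof.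
have [_ _ lP] := linkP v; split.
- case/mapP => u /lP[f [Sf vf uf uv]] ->.
  have vuf : [fset v; u] `<=` f by apply/fsubsetP => x; rewrite !inE => /orP[]/eqP->.
  split; [exact: simplex1 | | by rewrite fsub1set fset21 |].
    by split; [rewrite -cardfs_gt0 cardfs2 | exists f].
  by rewrite cardfs1 cardfs2 eq_sym uv.
- case=> _ [_ [f [Sf tf]]]; rewrite fsub1set cardfs1 => vt t2.
  have := cardfsD1 v t; rewrite vt t2 add1n => -[/esym/eqP/cardfs1P[u tu]].
  have := fset11 u; rewrite -tu in_fsetD1 => /andP[uv ut].
  have -> : t = [fset v; u] by rewrite -(fsetD1K vt) tu.
  by apply: map_f; apply/lP; exists f; split=> //; apply: (fsubsetP tf).
Qed.

End SimplicialSurface.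

Section VertexGenerated.
Variables (V : choiceType) (S : tri_surface V) (Vm : V -> pitch).

Definition tonnetz_of (s : {fset V}) : mset12 :=
  [ffun c => if #|`s| == 1 then \sum_(v <- s) (Vm v == c) * size (link S v)
             else \sum_(v <- s) (Vm v == c)].

Lemma tonnetz_of1 v c : tonnetz_of [fset v] c = (Vm v == c) * size (link S v).
Proof. by rewrite ffunE cardfs1 eqxx big_seq_fset1. Qed.

Lemma tonnetz_ofE s c : #|`s| != 1 -> tonnetz_of s c = \sum_(v <- s) (Vm v == c).
Proof. by rewrite ffunE => /negbTE ->. Qed.

Lemma tonnetz_of_gt0 s y : y \in s -> (0 < tonnetz_of s (Vm y))%N.
Proof.
move=> ys; rewrite ffunE; case: ifP => _; rewrite (big_fsetD1 y) //= eqxx //.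
by rewrite mul1n ltn_addr //; have [] := linkP S y.
Qed.

Lemma sum_next_vertex (s : {fset V}) c :
  \sum_(z <- s) (Vm (next s z) == c) = \sum_(z <- s) (Vm z == c).
Proof. exact: big_next (fset_uniq s). Qed.

Lemma count_facets (phi : {fset V} -> pitch) s c :
  count (fun t => phi t == c) (facets s) = \sum_(z <- s) (phi (s `\ z) == c).
Proof.
rewrite count_map -sum1_count big_mkcond.
by apply: eq_bigr => z _ /=; case: (_ == c).
Qed.

Lemma count_star v c :
  count (fun=> Vm v == c) (star S v) = tonnetz_of [fset v] c.
Proof.
by rewrite tonnetz_of1; case: eqP; rewrite ?count_pred0 // count_predT size_map mul1n.
Qed.

Lemma tonnetz_of_downwards : downwards_coherent S tonnetz_of.
Proof.
move=> s Ss s2; have /fset0Pn[x0 _] : s != fset0 by rewrite -cardfs_gt0 ltnW.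
pose opposite (t : {fset V}) := head x0 [seq z <- s | z \notin t].
have oppositeE z : z \in s -> opposite (s `\ z) = z.
  move=> zs; rewrite /opposite (@eq_in_filter _ _ (pred1 z)).
    by rewrite filter_pred1_uniq ?fset_uniq.
  by move=> y ys; rewrite in_fsetD1 ys andbT negbK.
exists (fun t => Vm (next s (opposite t))); split.
  apply/(bij_onto_count _ _ (uniq_facets s) (facetsP Ss s2)) => c.
  rewrite count_facets tonnetz_ofE ?neq_ltn ?s2 ?orbT // -sum_next_vertex.
  by apply: eq_big_seq => z zs; rewrite oppositeE.
move=> _ /(facetsP Ss s2)/mapP[z zs ->]; rewrite oppositeE //.
by apply: tonnetz_of_gt0; rewrite in_fsetD1 next_neq ?mem_next ?fset_uniq.
Qed.

Lemma tonnetz_of_upwards : upwards_coherent S tonnetz_of.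
Proof.
move=> r Sr r2; have /andP[r1 _] := simplex_card Sr.
have [/cardfs1P[v ->]|/eqP r2'] : #|`r| == 1 \/ #|`r| == 2.
- by move: r1 r2; case: #|`r| => [|[|[|]]] // _ _; [left | right].
- exists (fun=> Vm v); split.
    by apply/(bij_onto_count _ _ (uniq_star S v) (starP S v)) => c; rewrite count_star.
  by move=> t [_ _ vt _]; apply: tonnetz_of_gt0; rewrite -fsub1set.
have [u [w [uw ruw]]] := edge_fset2 r2'.
have [l [ul l2 lP]] := edge_two_faces (t := S) r2' (proj2 Sr).
case: l ul l2 lP => [|f1 [|f2 []]] //= /andP[f12 _] _ lP.
have facesP t : t \in [:: f1; f2] <-> prec S r t by rewrite prec_edge.
exists (fun t => if t == f1 then Vm u else Vm w); split.
  apply/(bij_onto_count _ _ _ facesP); first by rewrite /= andbT.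
  move=> c; rewrite tonnetz_ofE ?r2' // ruw big_fsetU1 ?inE //= big_seq_fset1.
  by move: f12; rewrite mem_seq1 eq_sym eqxx addn0 => /negbTE->.
move=> t /(prec_edge _ Sr r2')[_]; rewrite ruw => /fsubsetP uwt.
by case: (t == f1); apply/tonnetz_of_gt0/uwt; rewrite ?fset21 ?fset22.
Qed.

Lemma tonnetz_of_vertex_generated : vertex_generated S Vm tonnetz_of.
Proof.
have underlying_of v : underlying (tonnetz_of [fset v]) = [set Vm v].
  apply/setP => c; rewrite !inE tonnetz_of1 eq_sym.
  by case: eqP; rewrite ?mul1n //; have [] := linkP S v.
split=> //; first by split; [exact: tonnetz_of_downwards | exact: tonnetz_of_upwards].
  by move=> v; rewrite underlying_of cards1.
by move=> f Sf c; rewrite tonnetz_ofE // (face_card Sf).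
Qed.

Section Uniqueness.
Variable T : {fset V} -> mset12.
Hypothesis genT : vertex_generated S Vm T.

Lemma vertex_generated_label v c : (0 < T [fset v] c)%N -> c = Vm v.
Proof. by case: genT => _ _ TV _; rewrite (mem_underlying1 _ (TV v)) => /eqP. Qed.

Lemma vertex_generated_vertex v : T [fset v] = tonnetz_of [fset v].
Proof.
have [[_ up] _ _ _] := genT.
have [phi [bij _]] := up _ (simplex1 S v) ltac:(by rewrite cardfs1).
move/(bij_onto_count _ _ (uniq_star S v) (starP S v)): bij => Tcount.
have phiE t : t \in star S v -> phi t = Vm v.
  move=> tv; apply: vertex_generated_label; rewrite Tcount -has_count.
  by apply/hasP; exists t.
apply/ffunP => c; rewrite Tcount -count_star.
by apply: eq_in_count => t /phiE ->.
Qed.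

Lemma vertex_generated_edge s : is_simplex S s -> #|`s| = 2 -> T s = tonnetz_of s.
Proof.
move=> Ss s2; have s2' : (1 < #|`s|)%N by rewrite s2.
have [[down _] _ _ _] := genT; have [phi [bij phi_gt0]] := down _ Ss s2'.
apply/ffunP => c.
rewrite (iffLR (bij_onto_count _ _ (uniq_facets s) (facetsP Ss s2')) bij c).
rewrite count_facets tonnetz_ofE ?s2 // -sum_next_vertex.
apply: eq_big_seq => z zs; congr (_ == c).
rewrite edge_fsetD1 //; apply: vertex_generated_label; rewrite -(edge_fsetD1 s2 zs).
exact/phi_gt0/prec_fsetD1.
Qed.

Lemma vertex_generated_unique s : is_simplex S s -> T s = tonnetz_of s.
Proof.
move=> Ss; have /andP[s1 s3] := simplex_card Ss.
have [/cardfs1P[v ->]|s2|s3'] : [\/ #|`s| == 1, #|`s| = 2 | #|`s| = 3].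
- move: s1 s3; case: #|`s| => [|[|[|[|]]]] // _ _.
  + exact: Or31.
  + exact: Or32.
  + exact: Or33.
- exact: vertex_generated_vertex.
- exact: vertex_generated_edge.
have [_ _ _ Tface] := genT; apply/ffunP => c.
by rewrite Tface ?tonnetz_ofE ?s3' //; apply: simplex_face.
Qed.

End Uniqueness.

End VertexGenerated.

Theorem mainTheorem2 (V : choiceType) (S : tri_surface V) (Vm : V -> pitch) :
  exists T : {fset V} -> mset12,
    vertex_generated S Vm T /\
    forall T' : {fset V} -> mset12, vertex_generated S Vm T' ->
      forall s, is_simplex S s -> T' s = T s.
Proof.
exists (tonnetz_of S Vm); split; first exact: tonnetz_of_vertex_generated.
exact: vertex_generated_unique.
Qed.
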